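(* In the search model described in the context, if $pv>c(0)$, then it is optimal for the agent to engage in search, i.e., no strategy with $L_t=\emptyset$ for all $t$ is optimal (some strategy searching a set of positive measure yields strictly higher payoff than never searching).
   Context: A single agent searches for an innovation among research projects $J=[0,1)$. In each period $t=1,2,\ldots$ the agent may examine an arbitrary Lebesgue-measurable set $S\subseteq J$ at cost $C(S)=\int_S c(j)\,dj$, where $c:[0,1)\to\mathbb{R}$ is continuous, strictly increasing, and satisfies $\lim_{j\to 1}c(j)=\infty$. With probability $p\in(0,1)$ the innovation is feasible, in which case there is a single successful project $\hat j\in J$, distributed uniformly on $J$; examining $\hat j$ yields a success of value $v>0$, examining any other project yields nothing. With probability $1-p$ no project is successful. Payoffs and costs are discounted by $\delta\in(0,1)$ per period. A search strategy is a sequence $\sigma=(L_1,L_2,\ldots)$ of (possibly empty) measurable subsets of $[0,1)$, where $L_t$ is the set examined in period $t$ if no success occurred in periods $1,\ldots,t-1$; search ends once a success occurs. Let $S_t=\bigcup_{t'<t}L_{t'}$. The agent's payoff from $\sigma$ is $\mathbb{E}\big[\sum_{t\ge1}\delta^{t-1}\big(v\cdot\mathbf{1}\{\text{success in period } t\}-C(L_t)\cdot\mathbf{1}\{\text{no success before period } t\}\big)\big]$, where success in period $t$ means $\hat j$ exists, $\hat j\in L_t$ and $\hat j\notin S_t$. Never searching yields payoff zero. *)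

From HB Require Import structures.
From mathcomp Require Import all_boot all_order all_algebra.
From mathcomp Require Import all_classical all_reals all_analysis.
Set Implicit Arguments. Unset Strict Implicit. Unset Printing Implicit Defensive.
Import Order.TTheory GRing.Theory Num.Theory.
Import numFieldNormedType.Exports.
Local Open Scope classical_set_scope.
Local Open Scope ring_scope.

Section SearchModel.
Variable R : realType.

Definition projects : set R := `[0, 1[.

(* Lebesgue measure of a set, as a real number (all sets used are subsets
   of [0,1), hence of finite measure). *)
Definition leb (A : set R) : R := fine ((@lebesgue_measure R) A).

(* A search strategy: L t is the set examined in period t+1
   (periods are indexed from 0 here, so period t+1 in the paper is t). *)
Definition strategy := nat -> set R.

Definition searched (L : strategy) (t : nat) : set R :=
  [set x | exists2 k, (k < t)%N & L k x].

Definition cost (c : R -> R) (S : set R) : R :=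
  Rintegral (@lebesgue_measure R) S c.

Definition admissible (c : R -> R) (L : strategy) : Prop :=
  forall t, measurable (L t) /\ L t `<=` projects /\
            (@lebesgue_measure R).-integrable (L t) (EFin \o c).

(* Expected (undiscounted) payoff of period t:
   v * P(success in period t) - C(L_t) * P(no success before period t), where
   P(success in t) = p * |L_t \ S_t| and
   P(no success before t) = p * |J \ S_t| + (1 - p). *)
Definition period_payoff (p v : R) (c : R -> R) (L : strategy) (t : nat) : R :=
  v * (p * leb (L t `\` searched L t))
  - cost c (L t) * (p * leb (projects `\` searched L t) + (1 - p)).

(* Discounted period payoffs delta^(t-1) * (...) (with the 0-based index). *)
Definition disc_payoff (p v delta : R) (c : R -> R) (L : strategy) (t : nat) : R :=
  delta ^+ t * period_payoff p v c L t.

Definition payoff (p v delta : R) (c : R -> R) (L : strategy) : R :=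
  limn (series (disc_payoff p v delta c L)).

Definition never_search : strategy := fun _ => set0.

End SearchModel.

(** Search the interval [0, a) once, in the first period, and never again,
    where a > 0 is so small that c < p v on [0, a] (possible by continuity of
    c at 0).  This single search succeeds with probability p a and costs
    \int_0^a c <= c(a) a < p v a, so its payoff is strictly positive, whereas
    never searching yields 0. *)

From HB Require Import structures.
From mathcomp Require Import all_boot all_order all_algebra.
From mathcomp Require Import all_classical all_reals all_analysis.
Set Implicit Arguments. Unset Strict Implicit. Unset Printing Implicit Defensive.
Import Order.TTheory GRing.Theory Num.Theory.
Import numFieldNormedType.Exports.
Local Open Scope classical_set_scope.
Local Open Scope ring_scope.

Lemma cvg_series_head (R : realType) (u : R^nat) :
  (forall t, u t.+1 = 0) -> series u @ \oo --> u 0%N.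
Proof.
move=> u0; apply: cvg_near_cst; exists 1%N => // -[//|n] _ /=.
by rewrite /series /= big_nat_recl // big1 ?addr0.
Qed.

Lemma integrable_itv_co (R : realType) (f : R -> R) (a b : R) :
  {within `[a, b], continuous f} ->
  (@lebesgue_measure R).-integrable [set` `[a, b[] (EFin \o f).
Proof.
move=> cf; apply: integrableS (continuous_compact_integrable
  (@segment_compact _ a b) cf) => //.
by apply: subset_itvl; rewrite bnd_simp.
Qed.

Section SearchOnce.
Variable R : realType.
Variables (p v delta : R) (c : R -> R).

Lemma leb_set0 : leb (@set0 R) = 0.
Proof. by rewrite /leb measure0. Qed.

Lemma leb_itv0 (a : R) : 0 < a -> leb [set` `[0, a[] = a.
Proof. by move=> a0; rewrite /leb lebesgue_measure_itv /= lte_fin a0 /= subr0. Qed.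

Lemma leb_projects : leb (@projects R) = 1.
Proof. exact/leb_itv0/ltr01. Qed.

Lemma searched0 (L : strategy R) : searched L 0 = set0.
Proof. by apply/seteqP; split => x // []. Qed.

Lemma disc_payoff_set0 (L : strategy R) t :
  L t = set0 -> disc_payoff p v delta c L t = 0.
Proof.
move=> Lt; rewrite /disc_payoff /period_payoff Lt set0D leb_set0 /cost.
by rewrite Rintegral_set0 !mulr0 mul0r subr0 mulr0.
Qed.

Lemma payoff_never_search : payoff p v delta c (@never_search R) = 0.
Proof.
rewrite /payoff (_ : series _ = fun=> 0) ?lim_cst //.
by apply/funext => n; rewrite /series /= big1 // => i _; exact: disc_payoff_set0.
Qed.

Definition search_once (A : set R) : strategy R :=
  fun t => if t is 0%N then A else set0.

Lemma admissible_search_once (A : set R) :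
  measurable A -> A `<=` @projects R ->
  (@lebesgue_measure R).-integrable A (EFin \o c) ->
  admissible c (search_once A).
Proof. by move=> mA AJ iA [|t] //=; do 2!split => //; exact: integrable_set0. Qed.

Lemma cvg_series_search_once (A : set R) :
  series (disc_payoff p v delta c (search_once A)) @ \oo -->
  p * v * leb A - cost c A.
Proof.
have <- : disc_payoff p v delta c (search_once A) 0 = p * v * leb A - cost c A.
  rewrite /disc_payoff /period_payoff expr0 mul1r searched0 !setD0 /=.
  by rewrite leb_projects mulr1 addrCA subrr addr0 mulr1 mulrCA mulrA.
by apply: cvg_series_head => t; exact: disc_payoff_set0.
Qed.

Lemma payoff_search_once (A : set R) :
  payoff p v delta c (search_once A) = p * v * leb A - cost c A.
Proof. exact/cvg_lim/cvg_series_search_once. Qed.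

End SearchOnce.

Section CheapInterval.
Variables (R : realType) (c : R -> R).
Hypothesis c_cont : {within `[0, 1[, continuous c}.

Lemma exists_cheap_point (b : R) :
  c 0 < b -> exists a, [/\ 0 < a, a < 1 & c a < b].
Proof.
move=> c0b; have h0 : (0 : R) < 2^-1 by rewrite invr_gt0 ltr0n.
have h1 : (2^-1 : R) < 1 by rewrite invf_lt1 // ltr1n.
have half_sub : [set` `[0, 2^-1]] `<=` ([set` `[0, 1[] : set R).
  by apply: subset_itvl; rewrite bnd_simp.
have [_ c_right _] :=
  (continuous_within_itvP c h0).1 (continuous_subspaceW half_sub c_cont).
near (0 : R)^'+ => a.
exists a; split.
- by near: a; exact: nbhs_right_gt.
- by apply: (lt_trans _ h1); near: a; exact: nbhs_right_lt.
- by near: a; exact: cvgr_lt c_right _ c0b.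
Unshelve. all: end_near.
Qed.

Lemma integrable_itv0 (a : R) : a < 1 ->
  (@lebesgue_measure R).-integrable [set` `[0, a[] (EFin \o c).
Proof.
move=> a1; apply/integrable_itv_co/(continuous_subspaceW _ c_cont).
by apply: subset_itvl; rewrite bnd_simp.
Qed.

Hypothesis c_incr : forall x y : R, 0 <= x -> x < y -> y < 1 -> c x < c y.

Lemma cost_itv0_le (a : R) : 0 < a -> a < 1 -> cost c [set` `[0, a[] <= c a * a.
Proof.
move=> a0 a1; rewrite -[X in _ <= _ * X](leb_itv0 a0) /leb -Rintegral_cst //.
apply: le_Rintegral => //; first exact: integrable_itv0.
  exact/integrable_itv_co/continuous_subspaceT/cst_continuous.
by move=> x; rewrite /= in_itv /= => /andP[x0 xa]; exact/ltW/c_incr.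
Qed.

End CheapInterval.

Theorem lemma1 (R : realType) (c : R -> R) (p v delta : R) :
  {within `[0, 1[, continuous c} ->
  (forall x y : R, 0 <= x -> x < y -> y < 1 -> c x < c y) ->
  c x @[x --> 1^'-] --> +oo ->
  0 < p < 1 -> 0 < v -> 0 < delta < 1 ->
  c 0 < p * v ->
  payoff p v delta c (@never_search R) = 0 /\
  exists L : strategy R,
    admissible c L /\
    (exists t, 0 < leb (L t)) /\
    cvgn (series (disc_payoff p v delta c L)) /\
    payoff p v delta c (@never_search R) < payoff p v delta c L.
Proof.
move=> c_cont c_incr _ _ _ _ c0.
have [a [a0 a1 ca]] := exists_cheap_point c_cont c0.
pose A : set R := [set` `[0, a[].
split; first exact: payoff_never_search.
exists (search_once A); split.
  apply: admissible_search_once; first exact: measurable_itv.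
    by apply: subset_itvl; rewrite bnd_simp; exact: ltW.
  exact: integrable_itv0.
split; first by exists 0%N; rewrite /= leb_itv0.
split; first by apply/cvg_ex; eexists; exact: cvg_series_search_once.
rewrite payoff_never_search payoff_search_once leb_itv0 // subr_gt0.
apply: le_lt_trans (cost_itv0_le c_cont c_incr a0 a1) _.
by rewrite ltr_pM2r.
Qed.
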